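(* Let $O$ be a unitary operator and $P$ a self-adjoint projection on a finite-dimensional Hilbert space such that $P(O-\mathrm{Id})=O-\mathrm{Id}$ and $[P,O]=0$. Then for any two density matrices $\rho,\sigma$, $$\sqrt{F}(\rho,\sigma)-\sqrt{F}(\rho,O\sigma O^\dagger)\leq 2\sqrt{\mathrm{tr}(P\rho)\,\mathrm{tr}(P\sigma)}.$$
   Context: $\sqrt{F}(\rho,\sigma)=\mathrm{tr}\sqrt{\rho^{1/2}\sigma\rho^{1/2}}$ is the root fidelity of density matrices. *)

(* finite-dimensional complex Hilbert space = C^n,
   C an algebraically closed numeric field with conjugation (e.g. algC). *)
From HB Require Import structures.
From mathcomp Require Import all_boot all_order all_algebra.
Set Implicit Arguments. Unset Strict Implicit. Unset Printing Implicit Defensive.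
Import Order.TTheory GRing.Theory Num.Theory.
Local Open Scope ring_scope.

Section Defs.
Variable C : numClosedFieldType.

Definition adjmx m n (A : 'M[C]_(m, n)) : 'M[C]_(n, m) := map_mx Num.conj (A^T).

Definition psdmx n (A : 'M[C]_n) : Prop :=
  adjmx A = A /\ forall v : 'rV[C]_n, 0 <= (v *m A *m adjmx v) 0 0.

Definition density n (A : 'M[C]_n) : Prop := psdmx A /\ \tr A = 1.

Definition sa_projection n (P : 'M[C]_n) : Prop := adjmx P = P /\ P *m P = P.

Definition sqrtm n (A : 'M[C]_n) : 'M[C]_n :=
  let U := spectralmx A in
  adjmx U *m diag_mx (map_mx sqrtC (spectral_diag A)) *m U.

Definition root_fidelity n (rho sigma : 'M[C]_n) : C :=
  \tr (sqrtm (sqrtm rho *m sigma *m sqrtm rho)).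

End Defs.

(* The root fidelity is a trace norm: with R = sqrt rho and sigma = S^+ S we
   have F(rho, sigma) = ||S R||_1 and F(rho, O sigma O^+) = ||S O^+ R||_1, where
   ||Z||_1 = tr sqrt(Z^+ Z) is the maximum of |tr (Z W)| over contractions W.
   Taking W optimal for S R, the difference of the two fidelities is at most
   |tr (S (1 - O^+) R W)|.  As O - 1 is supported on the range of P and commutes
   with P, 1 - O^+ = P P - P O^+ P, so this trace splits into
   tr ((S P) (P R W)) - tr ((S P O^+) (P R W)), and Cauchy-Schwarz for the
   Hilbert-Schmidt inner product bounds each term by sqrt (tr (P sigma) tr (P rho)). *)

From HB Require Import structures.
From mathcomp Require Import all_boot all_order all_algebra.

Set Implicit Arguments.
Unset Strict Implicit.
Unset Printing Implicit Defensive.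

Import Order.TTheory GRing.Theory Num.Theory.
Local Open Scope ring_scope.

Local Notation "''[' u , v ]" := (dotmx u v) : ring_scope.
Local Notation "''[' u ]" := (dotmx u u) : ring_scope.

Section Adjoint.
Variable C : numClosedFieldType.

Lemma adjmxK m n (A : 'M[C]_(m, n)) : adjmx (adjmx A) = A.
Proof. by apply/matrixP => i j; rewrite !mxE conjCK. Qed.

Lemma adjmxM m n p (A : 'M[C]_(m, n)) (B : 'M[C]_(n, p)) :
  adjmx (A *m B) = adjmx B *m adjmx A.
Proof. by rewrite /adjmx trmx_mul map_mxM. Qed.

Lemma adjmxB m n (A B : 'M[C]_(m, n)) : adjmx (A - B) = adjmx A - adjmx B.
Proof. by apply/matrixP => i j; rewrite !mxE rmorphB. Qed.

Lemma adjmx1 n : adjmx (1%:M : 'M[C]_n) = 1%:M.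
Proof. by rewrite /adjmx trmx1 map_mx1. Qed.

Lemma adjmx_diag n (d : 'rV[C]_n) : adjmx (diag_mx d) = diag_mx (map_mx Num.conj d).
Proof. by rewrite /adjmx tr_diag_mx map_diag_mx. Qed.

Lemma unitarymx_adjmxR m n (U : 'M[C]_(m, n)) :
  U \is unitarymx -> U *m adjmx U = 1%:M.
Proof. by move/unitarymxP. Qed.

Lemma unitarymx_adjmxL n (U : 'M[C]_n) : U \is unitarymx -> adjmx U *m U = 1%:M.
Proof. by move/unitarymx_adjmxR/mulmx1C. Qed.

Lemma mxtrace_unitary_conj n (U A : 'M[C]_n) :
  U \is unitarymx -> \tr (U *m A *m adjmx U) = \tr A.
Proof. by move=> hU; rewrite mxtrace_mulC mulmxA unitarymx_adjmxL // mul1mx. Qed.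

Lemma adjmx_unitary n (U : 'M[C]_n) : (adjmx U \is unitarymx) = (U \is unitarymx).
Proof. exact: trmxC_unitary. Qed.

Lemma dotmx_row m p n (A : 'M[C]_(m, n)) (B : 'M[C]_(p, n)) i j :
  '[row i A, row j B] = (A *m adjmx B) i j.
Proof. by rewrite dotmxE !mxE; apply: eq_bigr => k _; rewrite !mxE. Qed.

Lemma dotmx_adjmx n (u v : 'rV[C]_n) : '[u, v] = (u *m adjmx v) 0 0.
Proof. exact: dotmxE. Qed.

Lemma dnormmx_ge0 n (u : 'rV[C]_n) : 0 <= '[u].
Proof. exact: dnorm_ge0. Qed.

Lemma dnormmxE n (u : 'rV[C]_n) : '[u] = \sum_k `|u 0 k| ^+ 2.
Proof. by rewrite dotmxE mxE; apply: eq_bigr => k _; rewrite !mxE normCK. Qed.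

Lemma dnormmx_unitary m n (u : 'rV[C]_m) (U : 'M[C]_(m, n)) :
  U \is unitarymx -> '[u *m U] = '[u].
Proof. by move=> hU; rewrite !dotmx_adjmx adjmxM mulmxA mulmxtVK. Qed.

Lemma mxtrace_mul_adjmx_rows m n (A B : 'M[C]_(m, n)) :
  \tr (A *m adjmx B) = \sum_i '[row i A, row i B].
Proof. by apply: eq_bigr => i _; rewrite dotmx_row. Qed.

Lemma mxtrace_mul_adjmx_mxvec m n (A B : 'M[C]_(m, n)) :
  \tr (A *m adjmx B) = '[mxvec A, mxvec B].
Proof.
rewrite dotmxE mxE (reindex _ (curry_mxvec_bij _ _)) /=.
under [LHS]eq_bigr do rewrite mxE; rewrite pair_bigA.
by apply: eq_bigr => -[i j] _; rewrite /= !mxE !mxvecE.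
Qed.

Lemma mxtrace_mul_adjmx_ge0 m n (A : 'M[C]_(m, n)) : 0 <= \tr (A *m adjmx A).
Proof. by rewrite mxtrace_mul_adjmx_mxvec dnormmx_ge0. Qed.

Lemma mxtrace_adjmx_mul_ge0 m n (A : 'M[C]_(m, n)) : 0 <= \tr (adjmx A *m A).
Proof. by rewrite mxtrace_mulC mxtrace_mul_adjmx_ge0. Qed.

Lemma normC_dotmx_le n (u v : 'rV[C]_n) : `|'[u, v]| <= sqrtC '[u] * sqrtC '[v].
Proof. by have [] := CauchySchwarz_sqrt (@dotmx C n) u v. Qed.

Lemma normC_mxtrace_mul_le m n (X : 'M[C]_(m, n)) (Y : 'M[C]_(n, m)) :
  `|\tr (X *m Y)| <= sqrtC (\tr (adjmx X *m X)) * sqrtC (\tr (Y *m adjmx Y)).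
Proof.
have := normC_dotmx_le (mxvec Y) (mxvec (adjmx X)).
by rewrite -!mxtrace_mul_adjmx_mxvec adjmxK mxtrace_mulC mulrC.
Qed.

End Adjoint.

Section Contraction.
Variable C : numClosedFieldType.

Definition contraction m n (W : 'M[C]_(m, n)) := forall v : 'rV_m, '[v *m W] <= '[v].

Lemma contraction_gram n (W U : 'M[C]_n) (c : 'rV[C]_n) :
    U \is unitarymx -> (forall k, 0 <= c 0 k <= 1) ->
  W *m adjmx W = adjmx U *m diag_mx c *m U -> contraction W.
Proof.
move=> hU hc hW v; set u := v *m adjmx U.
have -> : '[v *m W] = \sum_k c 0 k * `|u 0 k| ^+ 2.
  have uE : U *m adjmx v = adjmx u by rewrite adjmxM adjmxK.
  rewrite dotmx_adjmx adjmxM !mulmxA -(mulmxA v W) hW !mulmxA -(mulmxA _ U) uE.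
  rewrite -/u mul_mx_diag mxE; apply: eq_bigr => k _.
  by rewrite !mxE normCK mulrAC mulrC.
rewrite -(dnormmx_unitary v (_ : adjmx U \is unitarymx)) ?adjmx_unitary //.
rewrite dnormmxE; apply: ler_sum => k _.
by have /andP[_ ck1] := hc k; rewrite ler_piMl ?exprn_ge0.
Qed.

Lemma mxtrace_gram_contraction_le m n p (M : 'M[C]_(m, n)) (W : 'M[C]_(n, p)) :
  contraction W -> \tr (M *m W *m adjmx (M *m W)) <= \tr (M *m adjmx M).
Proof.
by move=> hW; rewrite !mxtrace_mul_adjmx_rows; apply: ler_sum => i _; rewrite row_mul.
Qed.

Lemma normC_mxtrace_contraction_le m n p
    (X : 'M[C]_(m, n)) (Y : 'M[C]_(n, p)) (W : 'M[C]_(p, m)) :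
  contraction W ->
  `|\tr (X *m Y *m W)| <= sqrtC (\tr (adjmx X *m X)) * sqrtC (\tr (Y *m adjmx Y)).
Proof.
move=> hW; rewrite -mulmxA; apply: le_trans (normC_mxtrace_mul_le _ _) _.
rewrite ler_wpM2l ?sqrtC_ge0 ?mxtrace_adjmx_mul_ge0 //.
rewrite ler_sqrtC ?nnegrE ?mxtrace_mul_adjmx_ge0 //.
exact: mxtrace_gram_contraction_le.
Qed.

End Contraction.

Section Spectral.
Variables (C : numClosedFieldType) (n : nat).
Implicit Types A : 'M[C]_n.

Lemma normalmx_spectralE A : A \is normalmx ->
  A = adjmx (spectralmx A) *m diag_mx (spectral_diag A) *m spectralmx A.
Proof. by move/orthomx_spectralP => {1}->; rewrite invmx_unitary ?spectral_unitarymx. Qed.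

Lemma normalmx_spectral_diagE A : A \is normalmx ->
  spectralmx A *m A *m adjmx (spectralmx A) = diag_mx (spectral_diag A).
Proof.
move/normalmx_spectralE => hA; rewrite [X in _ *m X *m _]hA.
have hU := spectral_unitarymx A.
by rewrite !mulmxA unitarymx_adjmxR // mul1mx -mulmxA unitarymx_adjmxR // mulmx1.
Qed.

Lemma psdmx_normal A : psdmx A -> A \is normalmx.
Proof. by case; rewrite /adjmx => hA _; apply/normalmxP; rewrite hA. Qed.

Lemma psdmx_gram (Z : 'M[C]_n) : psdmx (adjmx Z *m Z).
Proof.
split=> [|v]; first by rewrite adjmxM adjmxK.
have -> : v *m (adjmx Z *m Z) *m adjmx v = v *m adjmx Z *m adjmx (v *m adjmx Z).
  by rewrite adjmxM adjmxK !mulmxA.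
by rewrite -dotmx_adjmx dnormmx_ge0.
Qed.

Lemma psdmx_spectral_diag_ge0 A i : psdmx A -> 0 <= spectral_diag A 0 i.
Proof.
move=> hA; have := normalmx_spectral_diagE (psdmx_normal hA).
move/matrixP/(_ i i); rewrite [diag_mx _ _ _]mxE eqxx mulr1n => <-.
by rewrite -dotmx_row row_mul dotmx_adjmx; case: hA.
Qed.

Lemma mxtrace_sqrtm A : \tr (sqrtm A) = \sum_i sqrtC (spectral_diag A 0 i).
Proof.
rewrite mxtrace_mulC mulmxA unitarymx_adjmxR ?spectral_unitarymx // mul1mx.
by rewrite mxtrace_diag; apply: eq_bigr => i _; rewrite mxE.
Qed.

Lemma adjmx_sqrtm A : psdmx A -> adjmx (sqrtm A) = sqrtm A.
Proof.
move=> hA; rewrite !adjmxM adjmxK adjmx_diag !mulmxA.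
congr (_ *m diag_mx _ *m _); apply/rowP => i.
by rewrite !mxE geC0_conj // sqrtC_ge0 psdmx_spectral_diag_ge0.
Qed.

Lemma sqrtmK A : psdmx A -> sqrtm A *m sqrtm A = A.
Proof.
move=> hA; rewrite [in RHS](normalmx_spectralE (psdmx_normal hA)) /sqrtm.
rewrite !mulmxA mulmxtVK ?spectral_unitarymx // -(mulmxA (adjmx _) (diag_mx _)).
rewrite mulmx_diag.
by congr (_ *m diag_mx _ *m _); apply/rowP => i; rewrite !mxE -expr2 sqrtCK.
Qed.

End Spectral.

Section TraceNorm.
Variables (C : numClosedFieldType) (n : nat).

Definition trnorm (Z : 'M[C]_n) := \tr (sqrtm (adjmx Z *m Z)).

Variable Z : 'M[C]_n.
Let U := spectralmx (adjmx Z *m Z).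
Let d := spectral_diag (adjmx Z *m Z).
Let B := Z *m adjmx U.

Let U_unitary : U \is unitarymx. Proof. exact: spectral_unitarymx. Qed.

Let d_ge0 i : 0 <= d 0 i. Proof. exact/psdmx_spectral_diag_ge0/psdmx_gram. Qed.

Lemma trnormE : trnorm Z = \sum_i sqrtC (d 0 i).
Proof. exact: mxtrace_sqrtm. Qed.

Lemma trnorm_ge0 : 0 <= trnorm Z.
Proof. by rewrite trnormE sumr_ge0 // => i _; rewrite sqrtC_ge0 d_ge0. Qed.

Let gram_B : adjmx B *m B = diag_mx d.
Proof.
rewrite adjmxM adjmxK !mulmxA -(mulmxA U).
exact/normalmx_spectral_diagE/psdmx_normal/psdmx_gram.
Qed.

Let BU : B *m U = Z.
Proof. by rewrite -mulmxA unitarymx_adjmxL // mulmx1. Qed.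

Lemma ler_trnorm W : contraction W -> `|\tr (Z *m W)| <= trnorm Z.
Proof.
move=> hW; have /row_unitarymxP U_rows := U_unitary.
have -> : \tr (Z *m W) = \sum_i '[row i (U *m W), row i (adjmx B)].
  by rewrite -mxtrace_mul_adjmx_rows adjmxK [RHS]mxtrace_mulC mulmxA BU.
rewrite trnormE; apply: le_trans (ler_norm_sum _ _ _) _; apply: ler_sum => i _.
apply: le_trans (normC_dotmx_le _ _) _.
have -> : '[row i (adjmx B)] = d 0 i.
  by rewrite dotmx_row adjmxK gram_B mxE eqxx mulr1n.
rewrite -[leRHS]mul1r ler_wpM2r ?sqrtC_ge0 ?d_ge0 //.
rewrite -sqrtC1 ler_sqrtC ?nnegrE ?dnormmx_ge0 //.
by rewrite row_mul (le_trans (hW _)) // U_rows eqxx.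
Qed.

Lemma trnorm_attained : exists2 W, contraction W & \tr (Z *m W) = trnorm Z.
Proof.
(* An opaque B keeps [mulmxA] from rewriting inside it. *)
clearbody B; pose e := \row_i (sqrtC (d 0 i))^-1.
(* The adjoint of the partial isometry in the polar decomposition of Z. *)
exists (adjmx U *m diag_mx e *m adjmx B).
  pose c := \row_i (e 0 i * d 0 i * e 0 i).
  apply: (@contraction_gram _ _ _ U c) => // [k|].
    rewrite !mxE; have [->|dk0] := eqVneq (d 0 k) 0.
      by rewrite mulr0 mul0r lexx ler01.
    have sk0 : sqrtC (d 0 k) != 0 by rewrite sqrtC_eq0.
    by rewrite mulrC mulrA -expr2 exprVn sqrtCK mulVf // lexx ler01.
  rewrite (adjmxM _ (adjmx B)) adjmxK (adjmxM (adjmx U)) adjmxK adjmx_diag.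
  rewrite -!mulmxA (mulmxA (adjmx B)) gram_B.
  rewrite (mulmxA (diag_mx e)) mulmx_diag (mulmxA (diag_mx _)) mulmx_diag.
  congr (_ *m (diag_mx _ *m _)); apply/rowP => k.
  by rewrite !mxE geC0_conj // invr_ge0 sqrtC_ge0.
rewrite -[in LHS]BU !mulmxA mulmxtVK // mxtrace_mulC mulmxA gram_B.
rewrite mulmx_diag mxtrace_diag trnormE; apply: eq_bigr => i _; rewrite !mxE.
have [->|di0] := eqVneq (d 0 i) 0; first by rewrite sqrtC0 mul0r.
by rewrite -{1}(sqrtCK (d 0 i)) expr2 mulfK // sqrtC_eq0.
Qed.

End TraceNorm.

Lemma trnormB_le (C : numClosedFieldType) n (Z Z' : 'M[C]_n) :
  exists2 W, contraction W & trnorm Z - trnorm Z' <= `|\tr ((Z - Z') *m W)|.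
Proof.
have [W hW ZW] := trnorm_attained Z; exists W => //.
rewrite mulmxBl raddfB /= -[trnorm Z](ger0_norm (trnorm_ge0 Z)) -ZW.
apply: le_trans (lerB_dist _ _); rewrite lerD2l lerN2.
exact: ler_trnorm.
Qed.

Lemma mxtrace_proj_conj (R : comPzRingType) n (P A : 'M[R]_n) :
  P *m P = P -> \tr (P *m A *m P) = \tr (P *m A).
Proof. by move=> PP; rewrite mxtrace_mulC mulmxA PP. Qed.

Lemma sub1mx_compression (R : pzRingType) n (P O : 'M[R]_n) :
    P *m (O - 1%:M) = O - 1%:M -> P *m O = O *m P ->
  O - 1%:M = P *m O *m P - P *m P.
Proof.
move=> PO_supp PO_comm.
have OP_supp : (O - 1%:M) *m P = O - 1%:M.
  by rewrite mulmxBl mul1mx -PO_comm -[X in _ - X]mulmx1 -mulmxBr.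
by rewrite -mulmxBl -[X in P *m O - X]mulmx1 -mulmxBr PO_supp OP_supp.
Qed.

Lemma sub1mx_adjmx_compression (C : numClosedFieldType) n (P O : 'M[C]_n) :
    adjmx P = P -> P *m (O - 1%:M) = O - 1%:M -> P *m O = O *m P ->
  1%:M - adjmx O = P *m P - P *m adjmx O *m P.
Proof.
move=> Pa PO_supp PO_comm.
rewrite -opprB -adjmx1 -adjmxB (sub1mx_compression PO_supp PO_comm).
by rewrite adjmxB !adjmxM Pa opprB mulmxA.
Qed.

Lemma root_fidelity_gram (C : numClosedFieldType) n (rho T : 'M[C]_n) :
  psdmx rho -> root_fidelity rho (adjmx T *m T) = trnorm (T *m sqrtm rho).
Proof.
by move=> rho_psd; rewrite /root_fidelity /trnorm adjmxM adjmx_sqrtm // !mulmxA.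
Qed.

Theorem lemma8 (C : numClosedFieldType) (n : nat) (O P rho sigma : 'M[C]_n) :
  O \is unitarymx ->
  sa_projection P ->
  P *m (O - 1%:M) = O - 1%:M ->
  P *m O = O *m P ->
  density rho -> density sigma ->
  root_fidelity rho sigma - root_fidelity rho (O *m sigma *m adjmx O)
    <= 2 * sqrtC (\tr (P *m rho) * \tr (P *m sigma)).
Proof.
move=> O_unitary [Pa PP] PO_supp PO_comm [rho_psd _] [sigma_psd _].
have [S sigmaE] : exists S : 'M_n, sigma = adjmx S *m S.
  by exists (sqrtm sigma); rewrite adjmx_sqrtm // sqrtmK.
have rhoE : rho = sqrtm rho *m adjmx (sqrtm rho) by rewrite adjmx_sqrtm // sqrtmK.
have sigmaOE : O *m sigma *m adjmx O = adjmx (S *m adjmx O) *m (S *m adjmx O).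
  by rewrite sigmaE adjmxM adjmxK !mulmxA.
rewrite sigmaOE {1}sigmaE !root_fidelity_gram //.
move: (sqrtm rho) rhoE => R rhoE.
have [W W_contr le_W] := trnormB_le (S *m R) (S *m adjmx O *m R).
apply: le_trans le_W _.
have -> : S *m R - S *m adjmx O *m R
    = S *m P *m (P *m R) - S *m P *m adjmx O *m (P *m R).
  rewrite -mulmxBl -[X in X - _]mulmx1 -mulmxBr.
  by rewrite (sub1mx_adjmx_compression Pa PO_supp PO_comm) mulmxBr mulmxBl !mulmxA.
have rhoP : \tr (P *m rho) = \tr (P *m R *m adjmx (P *m R)).
  by rewrite rhoE adjmxM Pa -(mxtrace_proj_conj _ PP) !mulmxA.
have sigmaP : \tr (P *m sigma) = \tr (adjmx (S *m P) *m (S *m P)).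
  by rewrite sigmaE adjmxM Pa -(mxtrace_proj_conj _ PP) !mulmxA.
have bound X : \tr (adjmx X *m X) = \tr (P *m sigma) ->
    `|\tr (X *m (P *m R) *m W)| <= sqrtC (\tr (P *m rho) * \tr (P *m sigma)).
  move=> XP; rewrite mulrC -XP rhoP sqrtCM ?nnegrE
    ?mxtrace_adjmx_mul_ge0 ?mxtrace_mul_adjmx_ge0 //.
  exact: normC_mxtrace_contraction_le.
rewrite mulmxBl raddfB /= mulr_natl mulr2n; apply: le_trans (ler_normB _ _) _.
apply: lerD; apply: bound; rewrite sigmaP //.
by rewrite adjmxM adjmxK mulmxA -(mulmxA O) mxtrace_unitary_conj.
Qed.
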